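(* Let $\mathcal{M}=(C,\mathcal{A})$ be a circular-arc model, where $C$ is a circle and $\mathcal{A}=\{A_1=(s_1,t_1),\dots,A_n=(s_n,t_n)\}$ is a family of open arcs of $C$ (arc $(s_i,t_i)$ runs clockwise from $s_i$ to $t_i$), and let $G$ be its intersection graph with vertex $v_i$ corresponding to $A_i$. Assume that no set of at most three arcs of $\mathcal{A}$ has union equal to $C$. Let $p\in C$ be a point with $\max_{q\in C}|\mathcal{A}(q)| = |\mathcal{A}(p)| = 3$, and index the arcs so that $\mathcal{A}(p)=\{A_1,A_2,A_3\}$. Choose $\epsilon>0$ so small that no endpoint of any arc lies in $[p-\epsilon,p+\epsilon]$, and form the interval model obtained by replacing each $A_i$, $i\in\{1,2,3\}$, by the two arcs $(s_i,p-\epsilon)$ and $(p+\epsilon,t_i)$ (all other arcs unchanged). Let $G_p$ be its intersection graph, where $u_i$ ($1\le i\le 3$) corresponds to $(s_i,p-\epsilon)$, $u_{n+i}$ ($1\le i\le 3$) corresponds to $(p+\epsilon,t_i)$, and $u_k$ ($4\le k\le n$) corresponds to $A_k$. Then $\{u_1,u_2,u_3\}$ and $\{u_{n+1},u_{n+2},u_{n+3}\}$ are triangles of $G_p$ that have no common vertex and no edge of $G_p$ joins a vertex of one to a vertex of the other.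
   Context: For a point $q\in C$, $\mathcal{A}(q)$ denotes the set of arcs of $\mathcal{A}$ containing $q$. *)

(* The circle C is modelled as R/Z, points represented by
   reals in [0,1); clockwise = increasing parameter. *)
From mathcomp Require Import all_boot all_order all_algebra.
From mathcomp Require Import reals.
Set Implicit Arguments. Unset Strict Implicit. Unset Printing Implicit Defensive.
Import Order.TTheory GRing.Theory Num.Theory.
Local Open Scope ring_scope.

Section CA.
Variable R : realType.

Definition pt (x : R) : R := x - (Num.floor x)%:~R.

Definition on_circle (x : R) : Prop := 0 <= x /\ x < 1.

Definition in_arc (a : R * R) (q : R) : bool :=
  let: (s, t) := a in
  if s < t then (s < q) && (q < t) else (s < q) || (q < t).

Definition in_closed_nbhd (p eps q : R) : Prop :=
  exists d : R, `|d| <= eps /\ q = pt (p + d).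

Definition ply (n : nat) (A : nat -> R * R) (q : R) : nat :=
  count (fun i => in_arc (A i) q) (iota 0 n).

(* Model obtained by splitting arcs 0,1,2 at p (0-based indices):
   index k < 3      : (s_k, p - eps)   (u_{k+1} in the paper)
   index 3 <= k < n : A_k unchanged
   index n + i, i<3 : (p + eps, t_i)   (u_{n+i+1} in the paper) *)
Definition split_model (n : nat) (A : nat -> R * R) (p eps : R) (k : nat)
  : R * R :=
  if (k < 3)%N then ((A k).1, pt (p - eps))
  else if (k < n)%N then A k
  else (pt (p + eps), (A (k - n)%N).2).

Definition ig_vertex (m : nat) (k : nat) : Prop := (k < m)%N.
Definition ig_edge (m : nat) (B : nat -> R * R) (k l : nat) : Prop :=
  (k < m)%N /\ (l < m)%N /\ k <> l /\
  exists q, on_circle q /\ in_arc (B k) q /\ in_arc (B l) q.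

Definition is_triangle (m : nat) (B : nat -> R * R) (x y z : nat) : Prop :=
  ig_edge m B x y /\ ig_edge m B y z /\ ig_edge m B x z.

End CA.

From mathcomp Require Import all_boot all_order all_algebra.
From mathcomp Require Import reals ring lra zify.
Import Order.TTheory GRing.Theory Num.Theory.
Local Open Scope ring_scope.

(* Rotate the circle so that p becomes 0.  The three arcs through p then wrap
   around 0, and all endpoints lie in (eps, 1 - eps), so the left pieces are the
   intervals (s_i, 1 - eps) and the right pieces the intervals (eps, t_i): each
   family shares the points just inside its cut.  A left piece of A_i meeting a
   right piece of A_j forces s_i < t_j, and then A_i and A_j alone cover C,
   contradicting the hypothesis that no three arcs cover C. *)

Section Circle.
Context {R : realType}.
Implicit Types p q s t x y c eps : R.

Lemma pt_id y : 0 <= y -> y < 1 -> pt y = y.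
Proof. by move=> y0 y1; rewrite /pt (@floor_def _ _ 0) ?subr0 // y0 add0r. Qed.

Lemma pt_intD x (k : int) : pt (x + k%:~R) = pt x.
Proof.
by rewrite /pt floorDrz ?intr_int // intrKfloor rmorphD opprD addrACA subrr addr0.
Qed.

Lemma pt_on_circle x : on_circle (pt x).
Proof.
have := floor_le x; have := floorD1_gt x; rewrite /pt intrD; split; lra.
Qed.

Definition rotate p x := pt (x - p).

Lemma rotate_pt p x : rotate p (pt x) = pt (x - p).
Proof. by rewrite /rotate [pt x]/pt addrAC -intrN pt_intD. Qed.

Lemma pt_add_rotate p x : on_circle x -> pt (p + rotate p x) = x.
Proof.
by case=> x0 x1; rewrite /rotate [pt (x - p)]/pt addrA addrCA subrr addr0 -intrN pt_intD pt_id.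
Qed.

Lemma rotateE p x : on_circle p -> on_circle x ->
  rotate p x = if p <= x then x - p else x - p + 1.
Proof.
case=> ? ? [? ?]; rewrite /rotate; case: leP => ?; first by rewrite pt_id; lra.
by rewrite -(pt_intD _ 1) pt_id; lra.
Qed.

Lemma rotate_on_circle p x : on_circle (rotate p x).
Proof. exact: pt_on_circle. Qed.

Lemma rotate_rotate p s q : rotate (rotate p s) (rotate p q) = rotate s q.
Proof.
rewrite /rotate [pt (q - p)]/pt [pt (s - p)]/pt.
set F := (Num.floor (q - p))%:~R; set G := (Num.floor (s - p))%:~R.
have -> : q - p - F - (s - p - G) = q - s + (Num.floor (s - p) - Num.floor (q - p))%:~R.
  by rewrite intrB /F /G; ring.
exact: pt_intD.
Qed.

Lemma rotate_inj p s t : on_circle s -> on_circle t -> rotate p s = rotate p t -> s = t.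
Proof. by move=> hs ht E; rewrite -(pt_add_rotate p s hs) E pt_add_rotate. Qed.

(* The disjunct [t == s] accounts for the degenerate arc (s, s), which is
   the whole circle minus s. *)
Lemma in_arcE s t q : on_circle s -> on_circle t -> on_circle q ->
  in_arc (s, t) q = (0 < rotate s q) && ((rotate s q < rotate s t) || (t == s)).
Proof.
move=> hs ht hq; rewrite !rotateE //; move: hs ht hq => [? ?] [? ?] [? ?] /=.
by case: (ltgtP s t) => st; case: (ltgtP s q) => sq; case: (ltgtP q t) => qt;
  rewrite ?orbF ?orbT ?andbT /=; try lra.
Qed.

Lemma in_arc_rotate p s t q : on_circle s -> on_circle t -> on_circle q ->
  in_arc (s, t) q = in_arc (rotate p s, rotate p t) (rotate p q).
Proof.
move=> hs ht hq; rewrite in_arcE // in_arcE; try exact: rotate_on_circle.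
rewrite !rotate_rotate; congr (_ && (_ || _)).
by apply/eqP/eqP => [-> //|]; apply: rotate_inj.
Qed.

Lemma rotate_pt_addr p d : 0 <= d -> d < 1 -> rotate p (pt (p + d)) = d.
Proof. by move=> d0 d1; rewrite rotate_pt addrAC subrr add0r pt_id. Qed.

Lemma rotate_pt_subr p d : 0 < d -> d <= 1 -> rotate p (pt (p - d)) = 1 - d.
Proof.
by move=> d0 d1; rewrite rotate_pt addrAC subrr add0r -(pt_intD _ 1) pt_id; lra.
Qed.

Lemma rotate_far {p eps x} : on_circle x -> ~ in_closed_nbhd p eps x ->
  eps < rotate p x < 1 - eps.
Proof.
move=> hx far; have [r0 r1] := rotate_on_circle p x.
apply/andP; split; rewrite ltNge; apply/negP => h; apply: far.
  by exists (rotate p x); rewrite ger0_norm // pt_add_rotate.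
exists (rotate p x - 1); split; first by rewrite ler0_norm; lra.
by rewrite addrA -(pt_intD _ 1) subrK pt_add_rotate.
Qed.

Lemma in_arc_wrapE s t c : t <= s -> in_arc (s, t) c = (s < c) || (c < t).
Proof. by move=> ts; rewrite /= ltNge ts. Qed.

Lemma in_arc_linE s t c : s < t -> in_arc (s, t) c = (s < c) && (c < t).
Proof. by move=> st; rewrite /= st. Qed.

Lemma in_arc_through_wraps p s t : on_circle p -> on_circle s -> on_circle t ->
  in_arc (s, t) p -> rotate p t <= rotate p s.
Proof.
move=> hp hs ht; rewrite (in_arc_rotate p) // [rotate p p]/rotate subrr pt_id //=.
have [? _] := rotate_on_circle p s.
by case: ltP => // _ /andP[]; lra.
Qed.

Lemma in_arc_through_cover p (a b : R * R) q :
  on_circle p -> on_circle a.1 -> on_circle a.2 -> on_circle b.1 ->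
  on_circle b.2 -> on_circle q -> in_arc a p -> in_arc b p ->
  rotate p a.1 < rotate p b.2 -> in_arc a q || in_arc b q.
Proof.
case: a b => s t [s' t'] hp hs ht hs' ht' hq ap bp st'; rewrite /= in st'.
rewrite (in_arc_rotate p s t q) // (in_arc_rotate p s' t' q) //.
rewrite !in_arc_wrapE; try exact: in_arc_through_wraps.
by case: (ltP (rotate p s)) => //= ?; apply/orP; right; apply/orP; right; lra.
Qed.

Lemma in_arc_left_piece p eps s q : 0 < eps -> on_circle s -> on_circle q ->
  rotate p s < 1 - eps ->
  in_arc (s, pt (p - eps)) q = (rotate p s < rotate p q) && (rotate p q < 1 - eps).
Proof.
move=> eps0 hs hq s_lt; have [? _] := rotate_on_circle p s.
rewrite (in_arc_rotate p) //; last exact: pt_on_circle.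
rewrite rotate_pt_subr ?in_arc_linE //; lra.
Qed.

Lemma in_arc_right_piece p eps t q : 0 < eps -> on_circle t -> on_circle q ->
  eps < rotate p t ->
  in_arc (pt (p + eps), t) q = (eps < rotate p q) && (rotate p q < rotate p t).
Proof.
move=> eps0 ht hq t_gt; have [_ ?] := rotate_on_circle p t.
rewrite (in_arc_rotate p) //; last exact: pt_on_circle.
rewrite rotate_pt_addr ?in_arc_linE //; lra.
Qed.

Lemma left_pieces_meet p eps s s' : 0 < eps ->
  on_circle s -> on_circle s' -> rotate p s < 1 - eps -> rotate p s' < 1 - eps ->
  exists q, on_circle q /\ in_arc (s, pt (p - eps)) q /\ in_arc (s', pt (p - eps)) q.
Proof.
move=> eps0; wlog le_ss' : s s' / rotate p s <= rotate p s'.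
  move=> W hs hs' bs bs'; case: (leP (rotate p s) (rotate p s')) => ?; first exact: W.
  by have [q [? [? ?]]] := W s' s ltac:(lra) hs' hs bs' bs; exists q.
move=> hs hs' ? ?; have [? _] := rotate_on_circle p s.
pose c := (rotate p s' + (1 - eps)) / 2.
have rc : rotate p (pt (p + c)) = c by apply: rotate_pt_addr; rewrite /c; lra.
exists (pt (p + c)); split; first exact: pt_on_circle.
rewrite !in_arc_left_piece //; try exact: pt_on_circle.
rewrite rc /c.
by split; apply/andP; split; lra.
Qed.

Lemma right_pieces_meet p eps t t' : 0 < eps ->
  on_circle t -> on_circle t' -> eps < rotate p t -> eps < rotate p t' ->
  exists q, on_circle q /\ in_arc (pt (p + eps), t) q /\ in_arc (pt (p + eps), t') q.
Proof.
move=> eps0; wlog le_tt' : t t' / rotate p t <= rotate p t'.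
  move=> W ht ht' bt bt'; case: (leP (rotate p t) (rotate p t')) => ?; first exact: W.
  by have [q [? [? ?]]] := W t' t ltac:(lra) ht' ht bt' bt; exists q.
move=> ht ht' ? ?; have [_ ?] := rotate_on_circle p t.
pose c := (eps + rotate p t) / 2.
have rc : rotate p (pt (p + c)) = c by apply: rotate_pt_addr; rewrite /c; lra.
exists (pt (p + c)); split; first exact: pt_on_circle.
rewrite !in_arc_right_piece //; try exact: pt_on_circle.
rewrite rc /c.
by split; apply/andP; split; lra.
Qed.
End Circle.

Section SplitModel.
Context {R : realType} {n : nat} {A : nat -> R * R} {p eps : R}.
Hypotheses (Hn : (3 <= n)%N) (Hp : on_circle p) (Heps : 0 < eps).
Hypothesis Hpts : forall i, (i < n)%N -> on_circle (A i).1 /\ on_circle (A i).2.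
Hypothesis Hend : forall i, (i < n)%N ->
  ~ in_closed_nbhd p eps (A i).1 /\ ~ in_closed_nbhd p eps (A i).2.
Hypothesis Hthrough : forall i, (i < 3)%N -> in_arc (A i) p.

Let B := split_model n A p eps.

Lemma split_model_left i : (i < 3)%N -> B i = ((A i).1, pt (p - eps)).
Proof. by rewrite /B /split_model => ->. Qed.

Lemma split_model_right i : (i < 3)%N -> B (n + i) = (pt (p + eps), (A i).2).
Proof.
move=> hi; rewrite /B /split_model addKn.
by have [-> ->] : (n + i < 3)%N = false /\ (n + i < n)%N = false by split; lia.
Qed.

Lemma split_arc_endpoints {i} : (i < 3)%N ->
  [/\ on_circle (A i).1, on_circle (A i).2,
       rotate p (A i).1 < 1 - eps & eps < rotate p (A i).2].
Proof.
move=> hi; have [hs ht] := Hpts i ltac:(lia); have [s_far t_far] := Hend i ltac:(lia).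
case/andP: (rotate_far hs s_far) => _ ?; case/andP: (rotate_far ht t_far) => ? _.
by split.
Qed.

Lemma split_left_edge k l : (k < 3)%N -> (l < 3)%N -> k <> l ->
  ig_edge (n + 3) B k l.
Proof.
move=> hk hl kl; split; first lia; split; first lia; split=> //.
have [hsk _ fark _] := split_arc_endpoints hk.
have [hsl _ farl _] := split_arc_endpoints hl.
by rewrite !split_model_left //; apply: left_pieces_meet.
Qed.

Lemma split_right_edge k l : (n <= k < n + 3)%N -> (n <= l < n + 3)%N -> k <> l ->
  ig_edge (n + 3) B k l.
Proof.
move=> hk hl kl; split; first lia; split; first lia; split=> //.
have [i -> hi] : exists2 i, k = (n + i)%N & (i < 3)%N by exists (k - n)%N; lia.
have [j -> hj] : exists2 j, l = (n + j)%N & (j < 3)%N by exists (l - n)%N; lia.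
have [_ hti _ fari] := split_arc_endpoints hi.
have [_ htj _ farj] := split_arc_endpoints hj.
by rewrite !split_model_right //; apply: right_pieces_meet.
Qed.

Lemma split_cross_edge_cover i j : (i < 3)%N -> (j < 3)%N ->
  ig_edge (n + 3) B i (n + j) ->
  forall q, on_circle q -> in_arc (A i) q || in_arc (A j) q.
Proof.
move=> hi hj [_ [_ [_ [q [hq []]]]]].
have [hsi hti fari _] := split_arc_endpoints hi.
have [hsj htj _ farj] := split_arc_endpoints hj.
rewrite split_model_left // split_model_right // in_arc_left_piece //.
rewrite in_arc_right_piece // => /andP[lt_si _] /andP[_ lt_tj] q' hq'.
by apply: (@in_arc_through_cover _ p) => //; [exact: Hthrough | exact: Hthrough | lra].
Qed.
End SplitModel.

Theorem lemma3 (R : realType) (n : nat) (A : nat -> R * R) (p : R)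
  (Hn : (3 <= n)%N)
  (Hpts : forall i, (i < n)%N -> on_circle (A i).1 /\ on_circle (A i).2)
  (Hnondeg : forall i, (i < n)%N -> (A i).1 <> (A i).2)
  (Hcover : forall i j k, (i < n)%N -> (j < n)%N -> (k < n)%N ->
     exists q, on_circle q /\
       ~ (in_arc (A i) q \/ in_arc (A j) q \/ in_arc (A k) q))
  (Hp : on_circle p)
  (Hmax : forall q, on_circle q -> (ply n A q <= ply n A p)%N)
  (Hp3 : ply n A p = 3%N)
  (HAp : forall i, (i < n)%N -> (in_arc (A i) p <-> (i < 3)%N))
  (eps : R) (Heps : 0 < eps)
  (Hend : forall i, (i < n)%N ->
     ~ in_closed_nbhd p eps (A i).1 /\ ~ in_closed_nbhd p eps (A i).2) :
  let B := split_model n A p eps in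
  let m := (n + 3)%N in
  is_triangle m B 0 1 2 /\ is_triangle m B n n.+1 n.+2 /\
  (forall i j, (i < 3)%N -> (j < 3)%N -> i <> (n + j)%N) /\
  (forall i j, (i < 3)%N -> (j < 3)%N -> ~ ig_edge m B i (n + j)%N).
Proof.
move=> B m.
have through i : (i < 3)%N -> in_arc (A i) p by move=> hi; apply/(HAp i); lia.
have left_edge := split_left_edge Hn Heps Hpts Hend.
have right_edge := split_right_edge Hn Heps Hpts Hend.
split; first by split; [|split]; apply: left_edge.
split; first by split; [|split]; apply: right_edge; lia.
split=> [i j hi hj|i j hi hj]; first lia.
move/(split_cross_edge_cover Hn Hp Heps Hpts Hend through i j hi hj) => cover.
have [q [hq []]] := Hcover i j j ltac:(lia) ltac:(lia) ltac:(lia).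
by case/orP: (cover q hq) => ?; [left | right; left].
Qed.
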